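(* The category of finite graphs and the category of all (possibly infinite) graphs each have splitting coproducts and disjoint coproducts, and in each binary products distribute over binary coproducts, i.e. $A\times(B\sqcup C)\cong(A\times B)\sqcup(A\times C)$ canonically. Consequently, on each of these categories the generalized core model structure and the generalized cocore model structure are both left proper and right proper.
   Context: A graph is a set $V$ of vertices together with a symmetric relation $E\subseteq V\times V$ (undirected, no repeated edges); it is finite if $V$ is finite. Morphisms of graphs are maps of vertex sets preserving $E$; products and coproducts are categorical ones. Splitting coproducts: every $f:X\to A\sqcup B$ is isomorphic to $f_L\sqcup f_R$ with $f_L:X_L\to A$, $f_R:X_R\to B$, $X\cong X_L\sqcup X_R$. Disjoint coproducts: coproduct injections are monic, the pullback of $i_1:A\to A\sqcup B$ and $i_2:B\to A\sqcup B$ is the initial object, and the pullback of $i_1$ along itself (resp. $i_2$ along itself) is $A$ (resp. $B$) with identity maps. Generalized core model structure: weak equivalences are morphisms $f:A\to B$ for which some morphism $B\to A$ exists; cofibrations are morphisms with the left lifting property against all retractions; fibrations have the right lifting property against all acyclic cofibrations. Generalized cocore model structure: same weak equivalences; fibrations are morphisms with the right lifting property against all sections; cofibrations have the left lifting property against all acyclic fibrations. Left (resp. right) proper: pushouts of weak equivalences along cofibrations (resp. pullbacks along fibrations) are weak equivalences. *)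

From Stdlib Require Import List.

(** A graph: vertex type with a symmetric edge relation (loops allowed). *)
Record graph := Graph {
  V :> Type;
  E : V -> V -> Prop;
  E_sym : forall x y, E x y -> E y x }.

Record hom (A B : graph) := Hom {
  hmap :> V A -> V B;
  hmap_E : forall x y, E A x y -> E B (hmap x) (hmap y) }.
Arguments hmap {A B}.
Arguments Hom {A B}.

Definition heq {A B} (f g : hom A B) : Prop := forall x, f x = g x.

Definition hid (A : graph) : hom A A := Hom (fun x => x) (fun x y h => h).
Definition hcomp {A B C} (g : hom B C) (f : hom A B) : hom A C :=
  Hom (fun x => g (f x)) (fun x y h => hmap_E _ _ g _ _ (hmap_E _ _ f _ _ h)).

(** A full subcategory of graphs is given by a predicate on objects. *)
Definition cls := graph -> Prop.
Definition all_graphs : cls := fun _ => True.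
Definition finite_graph : cls := fun G => exists l : list (V G), forall v, In v l.

Section Cat.
Variable P : cls.

Definition is_iso {A B} (f : hom A B) : Prop :=
  exists g : hom B A, heq (hcomp g f) (hid A) /\ heq (hcomp f g) (hid B).

Definition monic {A B} (f : hom A B) : Prop :=
  forall X, P X -> forall g h : hom X A, heq (hcomp f g) (hcomp f h) -> heq g h.

Definition is_initial (I : graph) : Prop :=
  P I /\ forall X, P X -> exists h : hom I X, forall h' : hom I X, heq h' h.

Definition is_coproduct {A B C : graph} (i1 : hom A C) (i2 : hom B C) : Prop :=
  P C /\ forall X, P X -> forall (f : hom A X) (g : hom B X),
    exists h : hom C X, heq (hcomp h i1) f /\ heq (hcomp h i2) g /\
      forall h' : hom C X, heq (hcomp h' i1) f -> heq (hcomp h' i2) g -> heq h' h.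

Definition is_product {A B C : graph} (p1 : hom C A) (p2 : hom C B) : Prop :=
  P C /\ forall X, P X -> forall (f : hom X A) (g : hom X B),
    exists h : hom X C, heq (hcomp p1 h) f /\ heq (hcomp p2 h) g /\
      forall h' : hom X C, heq (hcomp p1 h') f -> heq (hcomp p2 h') g -> heq h' h.

Definition is_pullback {A B Z} (f : hom A Z) (g : hom B Z)
    (Q : graph) (p1 : hom Q A) (p2 : hom Q B) : Prop :=
  P Q /\ heq (hcomp f p1) (hcomp g p2) /\
  forall X, P X -> forall (u : hom X A) (v : hom X B),
    heq (hcomp f u) (hcomp g v) ->
    exists h : hom X Q, heq (hcomp p1 h) u /\ heq (hcomp p2 h) v /\
      forall h' : hom X Q, heq (hcomp p1 h') u -> heq (hcomp p2 h') v -> heq h' h.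

Definition is_pushout {A B Z} (f : hom Z A) (g : hom Z B)
    (Q : graph) (q1 : hom A Q) (q2 : hom B Q) : Prop :=
  P Q /\ heq (hcomp q1 f) (hcomp q2 g) /\
  forall X, P X -> forall (u : hom A X) (v : hom B X),
    heq (hcomp u f) (hcomp v g) ->
    exists h : hom Q X, heq (hcomp h q1) u /\ heq (hcomp h q2) v /\
      forall h' : hom Q X, heq (hcomp h' q1) u -> heq (hcomp h' q2) v -> heq h' h.

Definition splitting_coproducts : Prop :=
  forall A B, P A -> P B -> forall (C : graph) (i1 : hom A C) (i2 : hom B C),
  is_coproduct i1 i2 ->
  forall X, P X -> forall f : hom X C,
  exists (XL XR : graph) (fL : hom XL A) (fR : hom XR B)
         (X' : graph) (j1 : hom XL X') (j2 : hom XR X')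
         (fLR : hom X' C) (phi : hom X X'),
    P XL /\ P XR /\ is_coproduct j1 j2 /\
    heq (hcomp fLR j1) (hcomp i1 fL) /\ heq (hcomp fLR j2) (hcomp i2 fR) /\
    is_iso phi /\ heq f (hcomp fLR phi).

Definition disjoint_coproducts : Prop :=
  forall A B, P A -> P B -> forall (C : graph) (i1 : hom A C) (i2 : hom B C),
  is_coproduct i1 i2 ->
  monic i1 /\ monic i2 /\
  (exists (Q : graph) (p1 : hom Q A) (p2 : hom Q B),
      is_pullback i1 i2 Q p1 p2 /\ is_initial Q) /\
  is_pullback i1 i1 A (hid A) (hid A) /\
  is_pullback i2 i2 B (hid B) (hid B).

Definition products_distribute : Prop :=
  forall A B C, P A -> P B -> P C ->
  forall (D : graph) (i1 : hom B D) (i2 : hom C D), is_coproduct i1 i2 ->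
  forall (AD : graph) (pa : hom AD A) (pd : hom AD D), is_product pa pd ->
  forall (AB : graph) (qa : hom AB A) (qb : hom AB B), is_product qa qb ->
  forall (AC : graph) (ra : hom AC A) (rc : hom AC C), is_product ra rc ->
  forall (S : graph) (j1 : hom AB S) (j2 : hom AC S), is_coproduct j1 j2 ->
  forall u : hom S AD,
    heq (hcomp pa (hcomp u j1)) qa ->
    heq (hcomp pd (hcomp u j1)) (hcomp i1 qb) ->
    heq (hcomp pa (hcomp u j2)) ra ->
    heq (hcomp pd (hcomp u j2)) (hcomp i2 rc) ->
    is_iso u.

Definition lifts {A B X Y} (i : hom A B) (p : hom X Y) : Prop :=
  forall (u : hom A X) (v : hom B Y), heq (hcomp p u) (hcomp v i) ->
  exists h : hom B X, heq (hcomp h i) u /\ heq (hcomp p h) v.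

Definition weq {A B} (f : hom A B) : Prop := exists g : hom B A, True.
Definition retraction {X Y} (p : hom X Y) : Prop :=
  exists s : hom Y X, heq (hcomp p s) (hid Y).
Definition section {A B} (s : hom A B) : Prop :=
  exists r : hom B A, heq (hcomp r s) (hid A).

Definition core_cof {A B} (i : hom A B) : Prop :=
  forall X Y, P X -> P Y -> forall p : hom X Y, retraction p -> lifts i p.
Definition core_fib {X Y} (p : hom X Y) : Prop :=
  forall A B, P A -> P B -> forall i : hom A B, core_cof i -> weq i -> lifts i p.

Definition cocore_fib {X Y} (p : hom X Y) : Prop :=
  forall A B, P A -> P B -> forall i : hom A B, section i -> lifts i p.
Definition cocore_cof {A B} (i : hom A B) : Prop :=
  forall X Y, P X -> P Y -> forall p : hom X Y, cocore_fib p -> weq p -> lifts i p.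

Definition left_proper (cof : forall A B, hom A B -> Prop) : Prop :=
  forall Z A B, P Z -> P A -> P B ->
  forall (f : hom Z A) (g : hom Z B), weq f -> cof Z B g ->
  forall (Q : graph) (q1 : hom A Q) (q2 : hom B Q),
    is_pushout f g Q q1 q2 -> weq q2.

Definition right_proper (fib : forall A B, hom A B -> Prop) : Prop :=
  forall A B Z, P A -> P B -> P Z ->
  forall (f : hom A Z) (g : hom B Z), fib A Z f -> weq g ->
  forall (Q : graph) (p1 : hom Q A) (p2 : hom Q B),
    is_pullback f g Q p1 p2 -> weq p1.

Definition corollary5_for : Prop :=
  splitting_coproducts /\ disjoint_coproducts /\ products_distribute /\
  left_proper (@core_cof) /\ right_proper (@core_fib) /\
  left_proper (@cocore_cof) /\ right_proper (@cocore_fib).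

End Cat.

(** Both categories are full subcategories of graphs whose class of objects is
  closed under the concrete constructions: disjoint union, cartesian product
  with componentwise edges, images of partial surjections and the empty
  graph (record [closed_class]).  Everything is proved once for such a class:
  - every coproduct (product) compares with the concrete disjoint union
    (cartesian product).  Hence coproduct injections are injective with
    disjoint images, which gives disjoint coproducts, and a map into a
    coproduct splits its domain into the two preimage subgraphs, which gives
    splitting coproducts;
  - the canonical map (A×B) ⊔ (A×C) → A×(B⊔C) is inverted vertexwise,
    according to the summand of the second coordinate;
  - a weak equivalence is just a map with some map backwards, so properness
    only asks for one map.  Left properness holds because every (co)core
    cofibration g : Z → B extends any map Z → B to an endomorphism of B;
    right properness because every (co)core fibration has the right lifting
    property against the summand inclusion A → A ⊔ A. *)

From Stdlib Require Import List ProofIrrelevance.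
Import ListNotations.

Definition sumE {A B : graph} (x y : (V A + V B)%type) : Prop :=
  match x, y with
  | inl a, inl a' => E A a a'
  | inr b, inr b' => E B b b'
  | _, _ => False
  end.

Lemma sumE_sym {A B : graph} (x y : (V A + V B)%type) : sumE x y -> sumE y x.
Proof. destruct x, y; simpl; try tauto; apply E_sym. Qed.

Definition gsum (A B : graph) : graph :=
  Graph (V A + V B)%type (@sumE A B) (@sumE_sym A B).
Definition ginl (A B : graph) : hom A (gsum A B) :=
  Hom (B:=gsum A B) (fun a => inl a) (fun x y h => h).
Definition ginr (A B : graph) : hom B (gsum A B) :=
  Hom (B:=gsum A B) (fun b => inr b) (fun x y h => h).

Definition gcopair {A B C : graph} (f : hom A C) (g : hom B C) : hom (gsum A B) C.
Proof.
  refine (Hom (A:=gsum A B)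
            (fun x => match x with inl a => f a | inr b => g b end) _).
  intros [a|b] [a'|b'] h; simpl in h; try contradiction; apply hmap_E; exact h.
Defined.

Definition prodE {A B : graph} (x y : (V A * V B)%type) : Prop :=
  E A (fst x) (fst y) /\ E B (snd x) (snd y).

Lemma prodE_sym {A B : graph} (x y : (V A * V B)%type) : prodE x y -> prodE y x.
Proof. intros [h1 h2]; split; apply E_sym; assumption. Qed.

Definition gprod (A B : graph) : graph :=
  Graph (V A * V B)%type (@prodE A B) (@prodE_sym A B).
Definition gfst (A B : graph) : hom (gprod A B) A :=
  Hom (A:=gprod A B) fst (fun x y h => proj1 h).
Definition gsnd (A B : graph) : hom (gprod A B) B :=
  Hom (A:=gprod A B) snd (fun x y h => proj2 h).
Definition gpair {X A B : graph} (f : hom X A) (g : hom X B) : hom X (gprod A B) :=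
  Hom (B:=gprod A B) (fun x => (f x, g x))
    (fun x y h => conj (hmap_E _ _ f _ _ h) (hmap_E _ _ g _ _ h)).

Definition gempty : graph := Graph Empty_set (fun _ _ => False) (fun _ _ h => h).
Definition from_empty (X : graph) : hom gempty X :=
  Hom (A:=gempty) (fun x => match x with end) (fun x => match x with end).

Definition subg (X : graph) (T : V X -> Type) : graph :=
  Graph (sigT T) (fun l l' => E X (projT1 l) (projT1 l'))
        (fun l l' h => E_sym X _ _ h).
Definition incl (X : graph) (T : V X -> Type) : hom (subg X T) X :=
  Hom (A:=subg X T) (@projT1 _ T) (fun _ _ h => h).

(** Classes of graphs closed under the constructions above; images of
    partial surjections cover induced subgraphs. *)
Record closed_class (P : cls) := {
  closed_sum : forall A B, P A -> P B -> P (gsum A B);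
  closed_prod : forall A B, P A -> P B -> P (gprod A B);
  closed_image : forall (X Y : graph) (g : V X -> option (V Y)), P X ->
      (forall y, exists x, g x = Some y) -> P Y;
  closed_empty : P gempty }.

Lemma closed_all_graphs : closed_class all_graphs.
Proof. split; intros; exact I. Qed.

Lemma closed_finite_graphs : closed_class finite_graph.
Proof.
  split.
  - intros A B [l1 H1] [l2 H2]. exists (map inl l1 ++ map inr l2).
    intros [a|b]; apply in_or_app; [left|right]; apply in_map; auto.
  - intros A B [l1 H1] [l2 H2]. exists (list_prod l1 l2).
    intros [a b]; apply in_prod; auto.
  - intros X Y g [l H] Hsurj.
    exists (flat_map (fun x => match g x with Some y => [y] | None => [] end) l).
    intro y. destruct (Hsurj y) as [x Hx]. apply in_flat_map. exists x.
    split; [auto|]. rewrite Hx. left; reflexivity.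
  - exists []. intros [].
Qed.

Section Comparison.
Variable P : cls.
Hypothesis HP : closed_class P.

Lemma coprod_uniq {A B C : graph} (i1 : hom A C) (i2 : hom B C) :
  is_coproduct P i1 i2 -> forall X, P X -> forall h h' : hom C X,
  heq (hcomp h i1) (hcomp h' i1) -> heq (hcomp h i2) (hcomp h' i2) -> heq h h'.
Proof.
  intros [_ U] X PX h h' H1 H2.
  destruct (U X PX (hcomp h i1) (hcomp h i2)) as [k [_ [_ Hk]]].
  intro c. rewrite (Hk h (fun _ => eq_refl) (fun _ => eq_refl) c).
  rewrite (Hk h' (fun x => eq_sym (H1 x)) (fun x => eq_sym (H2 x)) c).
  reflexivity.
Qed.

Lemma prod_uniq {A B C : graph} (p1 : hom C A) (p2 : hom C B) :
  is_product P p1 p2 -> forall X, P X -> forall h h' : hom X C,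
  heq (hcomp p1 h) (hcomp p1 h') -> heq (hcomp p2 h) (hcomp p2 h') -> heq h h'.
Proof.
  intros [_ U] X PX h h' H1 H2.
  destruct (U X PX (hcomp p1 h) (hcomp p2 h)) as [k [_ [_ Hk]]].
  intro c. rewrite (Hk h (fun _ => eq_refl) (fun _ => eq_refl) c).
  rewrite (Hk h' (fun x => eq_sym (H1 x)) (fun x => eq_sym (H2 x)) c).
  reflexivity.
Qed.

Lemma coprod_to_gsum {A B C : graph} (i1 : hom A C) (i2 : hom B C) :
  P A -> P B -> is_coproduct P i1 i2 ->
  exists phi : hom C (gsum A B), (forall a, phi (i1 a) = inl a) /\
    (forall b, phi (i2 b) = inr b) /\ (forall c, gcopair i1 i2 (phi c) = c).
Proof.
  intros PA PB Hc. pose proof Hc as [PC U].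
  destruct (U _ (closed_sum P HP A B PA PB) (ginl A B) (ginr A B))
    as [phi [H1 [H2 _]]].
  exists phi. split; [exact H1|split; [exact H2|]].
  apply (coprod_uniq i1 i2 Hc C PC (hcomp (gcopair i1 i2) phi) (hid C)).
  - intro a; cbn. pose proof (H1 a) as e; cbn in e; rewrite e; reflexivity.
  - intro b; cbn. pose proof (H2 b) as e; cbn in e; rewrite e; reflexivity.
Qed.

Lemma gprod_to_prod {A B C : graph} (p1 : hom C A) (p2 : hom C B) :
  P A -> P B -> is_product P p1 p2 ->
  exists sg : hom (gprod A B) C, (forall x, p1 (sg x) = fst x) /\
    (forall x, p2 (sg x) = snd x) /\ (forall c, sg (p1 c, p2 c) = c).
Proof.
  intros PA PB Hc. pose proof Hc as [PC U].
  destruct (U _ (closed_prod P HP A B PA PB) (gfst A B) (gsnd A B))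
    as [sg [H1 [H2 _]]].
  exists sg. split; [exact H1|split; [exact H2|]].
  apply (prod_uniq p1 p2 Hc C PC (hcomp sg (gpair p1 p2)) (hid C)).
  - intro c; cbn. pose proof (H1 (p1 c, p2 c)) as e; cbn in e; rewrite e; reflexivity.
  - intro c; cbn. pose proof (H2 (p1 c, p2 c)) as e; cbn in e; rewrite e; reflexivity.
Qed.

Lemma coprod_injections {A B C : graph} (i1 : hom A C) (i2 : hom B C) :
  P A -> P B -> is_coproduct P i1 i2 ->
  (forall a a', i1 a = i1 a' -> a = a') /\
  (forall b b', i2 b = i2 b' -> b = b') /\
  (forall a b, i1 a <> i2 b).
Proof.
  intros PA PB Hc.
  destruct (coprod_to_gsum i1 i2 PA PB Hc) as [phi [H1 [H2 _]]].
  split; [|split]; intros x y e; apply (f_equal phi) in e;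
    rewrite ?H1, ?H2 in e; congruence.
Qed.

End Comparison.

Section Disjointness.
Variable P : cls.

Lemma monic_of_injective {A C : graph} (f : hom A C) :
  (forall a a', f a = f a' -> a = a') -> monic P f.
Proof. intros Hinj X _ g h H x. exact (Hinj _ _ (H x)). Qed.

Lemma empty_initial : P gempty -> is_initial P gempty.
Proof. intros Pe. split; [exact Pe|]. intros X _. exists (from_empty X). intros h' []. Qed.

Lemma pullback_self_of_injective {A Z : graph} (f : hom A Z) : P A ->
  (forall a a', f a = f a' -> a = a') -> is_pullback P f f A (hid A) (hid A).
Proof.
  intros PA Hinj. split; [exact PA|split; [intro; reflexivity|]].
  intros X _ u v Huv. exists u. split; [intro; reflexivity|split].
  - intro x. exact (Hinj _ _ (Huv x)).
  - intros h' Hh _ x. exact (Hh x).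
Qed.

Lemma pullback_empty_of_disjoint {A B Z : graph} (f : hom A Z) (g : hom B Z) :
  P gempty -> (forall a b, f a <> g b) ->
  is_pullback P f g gempty (from_empty A) (from_empty B).
Proof.
  intros Pe Hdisj. split; [exact Pe|split; [intros []|]].
  intros X _ u v Huv.
  assert (Hno : V X -> False) by (intro x; exact (Hdisj _ _ (Huv x))).
  exists (Hom (B:=gempty) (fun x => False_rect _ (Hno x))
                          (fun x _ _ => False_rect _ (Hno x))).
  split; [|split]; [intro x | intro x | intros h' _ _ x]; destruct (Hno x).
Qed.

Lemma disjoint (HP : closed_class P) : disjoint_coproducts P.
Proof.
  intros A B PA PB C i1 i2 Hc.
  destruct (coprod_injections P HP i1 i2 PA PB Hc) as [Hinj1 [Hinj2 Hdisj]].
  split; [exact (monic_of_injective i1 Hinj1)|].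
  split; [exact (monic_of_injective i2 Hinj2)|].
  split; [|split; apply pullback_self_of_injective; assumption].
  exists gempty, (from_empty A), (from_empty B).
  split; [apply pullback_empty_of_disjoint|apply empty_initial];
    [exact (closed_empty P HP) | exact Hdisj | exact (closed_empty P HP)].
Qed.

End Disjointness.

Section PreimageSplit.
Variables (X A B : graph) (k : hom X (gsum A B)).

Definition TL (x : V X) := {a : V A | k x = inl a}.
Definition TR (x : V X) := {b : V B | k x = inr b}.
Definition XL := subg X TL.
Definition XR := subg X TR.

Definition side (x : V X) : TL x + TR x.
Proof.
  unfold TL, TR. destruct (hmap k x : (V A + V B)%type) as [a|b] eqn:e;
    [left; exists a | right; exists b]; reflexivity.
Defined.

Lemma TL_unique x (t t' : TL x) : t = t'.
Proof.
  destruct t as [a e], t' as [a' e']. assert (a = a') by congruence. subst.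
  f_equal. apply proof_irrelevance.
Qed.

Lemma TR_unique x (t t' : TR x) : t = t'.
Proof.
  destruct t as [b e], t' as [b' e']. assert (b = b') by congruence. subst.
  f_equal. apply proof_irrelevance.
Qed.

Lemma side_l x (t : TL x) : side x = inl t.
Proof.
  destruct (side x) as [t'|[b e]]; [f_equal; apply TL_unique|].
  destruct t as [a e']. congruence.
Qed.

Lemma side_r x (t : TR x) : side x = inr t.
Proof.
  destruct (side x) as [[a e]|t']; [|f_equal; apply TR_unique].
  destruct t as [b e']. congruence.
Qed.

Definition fL : hom XL A.
Proof.
  refine (Hom (A:=XL) (fun l => proj1_sig (projT2 l)) _).
  intros [x [a e]] [y [a' e']] H; simpl in *.
  pose proof (hmap_E _ _ k _ _ H) as H'. rewrite e, e' in H'. exact H'.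
Defined.

Definition fR : hom XR B.
Proof.
  refine (Hom (A:=XR) (fun l => proj1_sig (projT2 l)) _).
  intros [x [b e]] [y [b' e']] H; simpl in *.
  pose proof (hmap_E _ _ k _ _ H) as H'. rewrite e, e' in H'. exact H'.
Defined.

(** Adjacent vertices lie over the same summand, so maps defined on the two
    preimages glue to a map on [X]. *)
Definition glue {Y : graph} (g1 : hom XL Y) (g2 : hom XR Y) : hom X Y.
Proof.
  refine (Hom (fun x => match side x with
                        | inl t => g1 (existT _ x t)
                        | inr t => g2 (existT _ x t) end) _).
  intros x y H. pose proof (hmap_E _ _ k _ _ H) as H'.
  destruct (side x) as [[a e]|[b e]], (side y) as [[a' e']|[b' e']];
    rewrite e, e' in H'; simpl in H'; try contradiction; apply hmap_E; exact H.
Defined.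

Lemma preimages_coproduct (P : cls) : P X ->
  is_coproduct P (incl X TL) (incl X TR).
Proof.
  intros PX. split; [exact PX|].
  intros Y PY g1 g2. exists (glue g1 g2). split; [|split].
  - intros [x t]. cbn. rewrite (side_l x t). reflexivity.
  - intros [x t]. cbn. rewrite (side_r x t). reflexivity.
  - intros h' H1 H2 x. cbn.
    destruct (side x) as [t|t]; [exact (H1 (existT _ x t))|exact (H2 (existT _ x t))].
Qed.

Lemma preimage_l_closed (P : cls) (HP : closed_class P) : P X -> P XL.
Proof.
  intros PX.
  apply (closed_image P HP X XL (fun x => match side x with
     | inl t => Some (existT _ x t) | inr _ => None end) PX).
  intros [x t]. exists x. rewrite (side_l x t). reflexivity.
Qed.

Lemma preimage_r_closed (P : cls) (HP : closed_class P) : P X -> P XR.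
Proof.
  intros PX.
  apply (closed_image P HP X XR (fun x => match side x with
     | inr t => Some (existT _ x t) | inl _ => None end) PX).
  intros [x t]. exists x. rewrite (side_r x t). reflexivity.
Qed.

End PreimageSplit.

(** Splitting: transport [f] to the disjoint union and split its domain. *)
Lemma splitting (P : cls) (HP : closed_class P) : splitting_coproducts P.
Proof.
  intros A B PA PB C i1 i2 Hc X PX f.
  destruct (coprod_to_gsum P HP i1 i2 PA PB Hc) as [phi [_ [_ Hphi]]].
  set (k := hcomp phi f).
  exists (XL X A B k), (XR X A B k), (fL X A B k), (fR X A B k), X,
    (incl X (TL X A B k)), (incl X (TR X A B k)), f, (hid X).
  split; [apply preimage_l_closed; auto|].
  split; [apply preimage_r_closed; auto|].
  split; [apply preimages_coproduct; auto|].
  split; [|split; [|split]].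
  - intros [x [a e]]. cbn in e |- *. rewrite <- (Hphi (f x)), e. reflexivity.
  - intros [x [b e]]. cbn in e |- *. rewrite <- (Hphi (f x)), e. reflexivity.
  - exists (hid X). split; intro; reflexivity.
  - intro; reflexivity.
Qed.

Section Distributivity.
Variables (P : cls) (A B C D AD AB AC S : graph).
Variables (i1 : hom B D) (i2 : hom C D) (pa : hom AD A) (pd : hom AD D)
  (qa : hom AB A) (qb : hom AB B) (ra : hom AC A) (rc : hom AC C)
  (j1 : hom AB S) (j2 : hom AC S) (u : hom S AD).
Variables (phi : hom D (gsum B C))
  (s1 : hom (gprod A B) AB) (s2 : hom (gprod A C) AC).
Hypotheses (Hphi1 : forall b, phi (i1 b) = inl b)
  (Hphi2 : forall c, phi (i2 c) = inr c)
  (Hphi : forall d, gcopair i1 i2 (phi d) = d).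
Hypotheses (Hs1a : forall x, qa (s1 x) = fst x) (Hs1b : forall x, qb (s1 x) = snd x)
  (Hs1 : forall y, s1 (qa y, qb y) = y).
Hypotheses (Hs2a : forall x, ra (s2 x) = fst x) (Hs2c : forall x, rc (s2 x) = snd x)
  (Hs2 : forall y, s2 (ra y, rc y) = y).
Hypotheses (Hu1a : heq (hcomp pa (hcomp u j1)) qa)
  (Hu1d : heq (hcomp pd (hcomp u j1)) (hcomp i1 qb))
  (Hu2a : heq (hcomp pa (hcomp u j2)) ra)
  (Hu2d : heq (hcomp pd (hcomp u j2)) (hcomp i2 rc)).

Definition dist_inv : hom AD S.
Proof.
  refine (Hom (fun z => match (phi (pd z) : (V B + V C)%type) with
     | inl b => j1 (s1 (pa z, b)) | inr c => j2 (s2 (pa z, c)) end) _).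
  intros z z' H.
  pose proof (hmap_E _ _ phi _ _ (hmap_E _ _ pd _ _ H)) as Hd.
  pose proof (hmap_E _ _ pa _ _ H) as Ha.
  destruct (hmap phi (hmap pd z) : (V B + V C)%type),
           (hmap phi (hmap pd z') : (V B + V C)%type);
    simpl in Hd; try contradiction; apply hmap_E, hmap_E; split; assumption.
Defined.

Lemma dist_inv_left : is_coproduct P j1 j2 -> heq (hcomp dist_inv u) (hid S).
Proof.
  intros Hs. apply (coprod_uniq P j1 j2 Hs S (proj1 Hs)).
  - intro y. cbn. pose proof (Hu1a y) as ea. pose proof (Hu1d y) as ed.
    cbn in ea, ed. rewrite ed, Hphi1, ea, Hs1. reflexivity.
  - intro y. cbn. pose proof (Hu2a y) as ea. pose proof (Hu2d y) as ed.
    cbn in ea, ed. rewrite ed, Hphi2, ea, Hs2. reflexivity.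
Qed.

Lemma dist_inv_right : is_product P pa pd -> heq (hcomp u dist_inv) (hid AD).
Proof.
  intros Hp. apply (prod_uniq P pa pd Hp AD (proj1 Hp)); intro z; cbn;
    pose proof (Hphi (pd z)) as e;
    destruct (hmap phi (hmap pd z) : (V B + V C)%type) as [b|c].
  - pose proof (Hu1a (s1 (pa z, b))) as ea. cbn in ea. rewrite ea, Hs1a. reflexivity.
  - pose proof (Hu2a (s2 (pa z, c))) as ea. cbn in ea. rewrite ea, Hs2a. reflexivity.
  - pose proof (Hu1d (s1 (pa z, b))) as ed. cbn in ed. rewrite ed, Hs1b. exact e.
  - pose proof (Hu2d (s2 (pa z, c))) as ed. cbn in ed. rewrite ed, Hs2c. exact e.
Qed.

End Distributivity.

Lemma distributivity (P : cls) (HP : closed_class P) : products_distribute P.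
Proof.
  intros A B C PA PB PC D i1 i2 Hd AD pa pd Hpd AB qa qb Hab AC ra rc Hac
    S j1 j2 Hs u Hu1a Hu1d Hu2a Hu2d.
  destruct (coprod_to_gsum P HP i1 i2 PB PC Hd) as [phi [Hphi1 [Hphi2 Hphi]]].
  destruct (gprod_to_prod P HP qa qb PA PB Hab) as [s1 [Hs1a [Hs1b Hs1]]].
  destruct (gprod_to_prod P HP ra rc PA PC Hac) as [s2 [Hs2a [Hs2c Hs2]]].
  exists (dist_inv A B C D AD AB AC S pa pd j1 j2 phi s1 s2). split.
  - apply dist_inv_left with (P := P) (i1 := i1) (i2 := i2) (qa := qa) (qb := qb)
      (ra := ra) (rc := rc); assumption.
  - apply dist_inv_right with (P := P) (i1 := i1) (i2 := i2) (qa := qa) (qb := qb)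
      (ra := ra) (rc := rc); assumption.
Qed.

Section Properness.
Variable P : cls.
Hypothesis HP : closed_class P.

Lemma pushout_leg_weq {Z A B : graph} (f : hom Z A) (g : hom Z B) (r : hom A Z)
    (v : hom B B) : P B -> heq (hcomp v g) (hcomp g (hcomp r f)) ->
  forall Q q1 q2, is_pushout P f g Q q1 q2 -> weq q2.
Proof.
  intros PB Hv Q q1 q2 [_ [_ U]].
  destruct (U B PB (hcomp g r) v) as [h _].
  - intro z. symmetry. apply Hv.
  - exists h. exact I.
Qed.

(** Core cofibrations [g : Z -> B] lift against the retraction
    [Z ⊔ B -> B] (which is [g] on [Z], the identity on [B]), hence every
    map [Z -> B] extends along [g] to an endomorphism of [B]. *)
Lemma core_cof_extends {Z B : graph} (g : hom Z B) : P Z -> P B ->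
  core_cof P g -> forall t : hom Z B, exists v : hom B B, heq (hcomp v g) t.
Proof.
  intros PZ PB Hg t.
  destruct (Hg (gsum Z B) B (closed_sum P HP Z B PZ PB) PB (gcopair g (hid B))
              (ex_intro _ (ginr Z B) (fun _ => eq_refl)) (ginl Z B) (hid B)
              (fun _ => eq_refl)) as [h [Hh _]].
  exists (hcomp (gcopair t (hid B)) h).
  intro z. pose proof (Hh z) as e. cbn in e |- *. rewrite e. reflexivity.
Qed.

Lemma fst_cocore_fib (B : graph) : cocore_fib P (gfst B B).
Proof.
  intros A' B' _ _ i [rho Hrho] u v Hsq.
  exists (gpair v (hcomp (gsnd B B) (hcomp u rho))). split.
  - intro a. pose proof (Hrho a) as e. pose proof (Hsq a) as e2. cbn in e, e2 |- *.
    rewrite e, <- e2. destruct (hmap u a); reflexivity.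
  - intro; reflexivity.
Qed.

(** Cocore cofibrations [g : Z -> B] lift against the acyclic fibration
    [B × B -> B], hence every map [Z -> B] extends along [g] as well. *)
Lemma cocore_cof_extends {Z B : graph} (g : hom Z B) : P B ->
  cocore_cof P g -> forall t : hom Z B, exists v : hom B B, heq (hcomp v g) t.
Proof.
  intros PB Hg t.
  destruct (Hg (gprod B B) B (closed_prod P HP B B PB PB) PB (gfst B B)
              (fst_cocore_fib B) (ex_intro _ (gpair (hid B) (hid B)) I)
              (gpair g t) (hid B) (fun _ => eq_refl)) as [h [Hh _]].
  exists (hcomp (gsnd B B) h).
  intro z. pose proof (Hh z) as e. cbn in e |- *. rewrite e. reflexivity.
Qed.

Lemma pullback_leg_weq {A B Z : graph} (f : hom A Z) (g : hom B Z) (s : hom Z B) :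
  P A -> lifts (ginl A A) f -> forall Q p1 p2, is_pullback P f g Q p1 p2 -> weq p1.
Proof.
  intros PA Hl Q p1 p2 [_ [_ U]].
  destruct (Hl (hid A) (gcopair f (hcomp g (hcomp s f)))) as [h [_ Hh]].
  - intro a; reflexivity.
  - destruct (U A PA (hcomp h (ginr A A)) (hcomp s f)) as [k _].
    + intro a. exact (Hh (inr a)).
    + exists k. exact I.
Qed.

Lemma inl_lifts_retraction {A X Y : graph} (p : hom X Y) :
  retraction p -> lifts (ginl A A) p.
Proof.
  intros [s Hs] u v Hsq.
  exists (gcopair u (hcomp s (hcomp v (ginr A A)))). split.
  - intro a; reflexivity.
  - intros [a|a]; [exact (Hsq a)|exact (Hs (v (inr a)))].
Qed.

(** [inl : A -> A ⊔ A] is a section of the codiagonal, hence a weak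
    equivalence, a core cofibration and a section. *)
Lemma inl_section (A : graph) : section (ginl A A).
Proof. exists (gcopair (hid A) (hid A)). intro; reflexivity. Qed.

Lemma core_fib_lifts_inl {A Z : graph} (f : hom A Z) : P A ->
  core_fib P f -> lifts (ginl A A) f.
Proof.
  intros PA Hf. apply (Hf A (gsum A A) PA (closed_sum P HP A A PA PA)).
  - intros X Y _ _ p Hp. exact (inl_lifts_retraction p Hp).
  - destruct (inl_section A) as [r _]. exists r. exact I.
Qed.

Lemma core_left_proper : left_proper P (@core_cof P).
Proof.
  intros Z A B PZ PA PB f g [r _] Hg Q q1 q2 Hpo.
  destruct (core_cof_extends g PZ PB Hg (hcomp g (hcomp r f))) as [v Hv].
  exact (pushout_leg_weq f g r v PB Hv Q q1 q2 Hpo).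
Qed.

Lemma core_right_proper : right_proper P (@core_fib P).
Proof.
  intros A B Z PA PB PZ f g Hf [s _] Q p1 p2 Hpb.
  exact (pullback_leg_weq f g s PA (core_fib_lifts_inl f PA Hf) Q p1 p2 Hpb).
Qed.

Lemma cocore_left_proper : left_proper P (@cocore_cof P).
Proof.
  intros Z A B PZ PA PB f g [r _] Hg Q q1 q2 Hpo.
  destruct (cocore_cof_extends g PB Hg (hcomp g (hcomp r f))) as [v Hv].
  exact (pushout_leg_weq f g r v PB Hv Q q1 q2 Hpo).
Qed.

Lemma cocore_right_proper : right_proper P (@cocore_fib P).
Proof.
  intros A B Z PA PB PZ f g Hf [s _] Q p1 p2 Hpb.
  assert (Hl : lifts (ginl A A) f).
  { exact (Hf A (gsum A A) PA (closed_sum P HP A A PA PA) _ (inl_section A)). }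
  exact (pullback_leg_weq f g s PA Hl Q p1 p2 Hpb).
Qed.

End Properness.

Lemma corollary5_closed (P : cls) (HP : closed_class P) : corollary5_for P.
Proof.
  exact (conj (splitting P HP) (conj (disjoint P HP) (conj (distributivity P HP)
    (conj (core_left_proper P HP) (conj (core_right_proper P HP)
    (conj (cocore_left_proper P HP) (cocore_right_proper P HP))))))).
Qed.

Theorem corollary5 :
  corollary5_for finite_graph /\ corollary5_for all_graphs.
Proof.
  split; apply corollary5_closed;
    [exact closed_finite_graphs | exact closed_all_graphs].
Qed.
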